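(* For $n\in\{4,5\}$ and every $\varepsilon>0$, there exists a symmetric matrix $A\in\mathbb{R}^{n\times n}$ with $\max_{i,j}|a_{ij}|=1$ and a factorization $A=LTL^T$, where $L=(l_{ij})$ is unit lower triangular with first column $e_1$ and $|l_{ij}|\le 1$, and $T$ is symmetric tridiagonal, such that $\max_{i,j}|t_{ij}|>2^{n-1}-\varepsilon$. Consequently the bound $2^{n-1}$ on the growth factor $\max_{i,j}|t_{ij}|/\max_{i,j}|a_{ij}|$ can be approached arbitrarily closely for $n=4,5$.
   Context: $e_1$ denotes the first column of the $n\times n$ identity matrix. Such factorizations $A=LTL^T$ (with $A$ already permuted) are those produced by Aasen's algorithm. *)

From HB Require Import structures.
From mathcomp Require Import all_boot all_order all_algebra.
Set Implicit Arguments. Unset Strict Implicit. Unset Printing Implicit Defensive.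
Import Order.TTheory GRing.Theory Num.Theory.
Local Open Scope ring_scope.

Definition maxabs (R : realFieldType) (n : nat) (M : 'M[R]_n) : R :=
  \big[Num.max/0]_(i < n) \big[Num.max/0]_(j < n) `|M i j|.

Definition unit_lower (R : realFieldType) (n : nat) (L : 'M[R]_n) : Prop :=
  (forall i j : 'I_n, (i < j)%N -> L i j = 0) /\ (forall i : 'I_n, L i i = 1).

Definition first_col_e1 (R : realFieldType) (n : nat) (L : 'M[R]_n) : Prop :=
  forall i j : 'I_n, nat_of_ord j = 0%N -> L i j = (i == j)%:R.

Definition tridiagonal (R : realFieldType) (n : nat) (T : 'M[R]_n) : Prop :=
  forall i j : 'I_n, (i.+1 < j)%N || (j.+1 < i)%N -> T i j = 0.

From HB Require Import structures.
From mathcomp Require Import all_boot all_order all_algebra.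
Import Order.TTheory GRing.Theory Num.Theory.
Local Open Scope ring_scope.

(* For n = 4, 5 the bound 2^(n-1) is even attained, by integer matrices A and L
   with entries in {-1, 0, 1}.  Checking that they form an admissible
   factorization is a finite integer computation, done by evaluation; all the
   properties involved are preserved by the ring morphism int -> R, so the same
   matrices work over any real field. *)

Section MaxAbs.
Variables (R : realFieldType) (n : nat).

Lemma maxabs_le (M : 'M[R]_n) c :
  0 <= c -> (forall i j, `|M i j| <= c) -> maxabs M <= c.
Proof.
move=> c_ge0 Mc; rewrite /maxabs.
elim/big_ind: _ => // [x y xc yc|i _]; first by rewrite ge_max xc yc.
by elim/big_ind: _ => // x y xc yc; rewrite ge_max xc yc.
Qed.

Lemma ler_maxabs (M : 'M[R]_n) i j : `|M i j| <= maxabs M.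
Proof. by rewrite /maxabs (bigD1 i) //= le_max (bigD1 j) //= le_max lexx. Qed.

End MaxAbs.

Arguments ler_maxabs {R n} M i j.

Section IntegerFunctions.
Variable n : nat.
Implicit Types (f g : nat -> nat -> int) (P : nat -> nat -> bool).

Definition all_ij P := all (fun i => all (P i) (iota 0 n)) (iota 0 n).
Definition has_ij P := has (fun i => has (P i) (iota 0 n)) (iota 0 n).

Lemma all_ijP P : all_ij P -> forall i j : 'I_n, P i j.
Proof.
move=> /allP Pall i j.
have /Pall/allP Pi : nat_of_ord i \in iota 0 n by rewrite mem_iota add0n ltn_ord.
by apply: Pi; rewrite mem_iota add0n ltn_ord.
Qed.

Lemma has_ijP P : has_ij P -> exists i j : 'I_n, P i j.
Proof.
case/hasP=> i; rewrite mem_iota /= => lt_in.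
case/hasP=> j; rewrite mem_iota /= => lt_jn Pij.
by exists (Ordinal lt_in), (Ordinal lt_jn).
Qed.

(* Sums are written with [foldr] rather than [\sum] so that they evaluate. *)
Definition mulf f g i j := foldr (fun k s => f i k * g k j + s) 0 (iota 0 n).
Definition trf f i j := f j i.

Definition maxabs_is f c :=
  all_ij (fun i j => `|f i j| <= c) && has_ij (fun i j => `|f i j| == c).
Definition unit_lowerb f :=
  all_ij (fun i j => ((i < j)%N ==> (f i j == 0)) && ((i == j) ==> (f i j == 1))).
Definition first_col_e1b f := all_ij (fun i j => (j == 0)%N ==> (f i j == (i == j)%:R)).
Definition tridiagonalb f :=
  all_ij (fun i j => ((i.+1 < j)%N || (j.+1 < i)%N) ==> (f i j == 0)).

End IntegerFunctions.

Arguments all_ijP {n P}.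
Arguments has_ijP {n P}.

Definition mx_of_int (R : realFieldType) n (f : nat -> nat -> int) : 'M[R]_n :=
  \matrix_(i, j) (f i j)%:~R.

Section IntegerMatrices.
Context {R : realFieldType} {n : nat}.
Implicit Types (f g : nat -> nat -> int).
Local Notation mx_of_int := (mx_of_int R n).
Local Notation all_ij := (all_ij n).

Lemma mx_of_int_mul f g : mx_of_int f *m mx_of_int g = mx_of_int (mulf n f g).
Proof.
apply/matrixP => i j; rewrite !mxE.
have -> : mulf n f g i j = \sum_(k <- iota 0 n) f i k * g k j.
  by rewrite /mulf; elim: (iota 0 n) => [|k s IHs]; rewrite ?big_nil ?big_cons //= IHs.
have -> : iota 0 n = index_iota 0 n by rewrite /index_iota subn0.
rewrite big_mkord rmorph_sum.
by apply: eq_bigr => k _; rewrite !mxE -intrM.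
Qed.

Lemma mx_of_int_tr f : (mx_of_int f)^T = mx_of_int (trf f).
Proof. by apply/matrixP => i j; rewrite !mxE. Qed.

Lemma eq_mx_of_int {f g} :
  all_ij (fun i j => f i j == g i j) -> mx_of_int f = mx_of_int g.
Proof. by move=> fg; apply/matrixP => i j; rewrite !mxE (eqP (all_ijP fg i j)). Qed.

Lemma mx_of_int_sym {f} :
  all_ij (fun i j => f j i == f i j) -> (mx_of_int f)^T = mx_of_int f.
Proof. by move=> fsym; rewrite mx_of_int_tr; apply: eq_mx_of_int. Qed.

Lemma mx_of_int_norm_le1 {f} :
  all_ij (fun i j => `|f i j| <= 1) -> forall i j, `|mx_of_int f i j| <= 1.
Proof. by move=> f1 i j; rewrite mxE -intr_norm lerz1 (all_ijP f1). Qed.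

Lemma maxabs_mx_of_int {f c} : maxabs_is n f c -> maxabs (mx_of_int f) = c%:~R.
Proof.
case/andP=> fc /has_ijP[a [b /eqP fab]].
have c_ge0 : 0 <= c by rewrite -fab.
apply/eqP; rewrite eq_le; apply/andP; split.
  apply: maxabs_le => [|i j]; first by rewrite ler0z.
  by rewrite mxE -intr_norm ler_int (all_ijP fc).
by apply: le_trans (ler_maxabs _ a b); rewrite mxE -intr_norm fab.
Qed.

Lemma unit_lower_mx_of_int {f} : unit_lowerb n f -> unit_lower (mx_of_int f).
Proof.
move=> fL; split=> [i j lt_ij|i]; rewrite mxE.
  by have /andP[/implyP/(_ lt_ij)/eqP -> _] := all_ijP fL i j.
by have /andP[_ /implyP/(_ (eqxx _))/eqP ->] := all_ijP fL i i.
Qed.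

Lemma first_col_e1_mx_of_int {f} : first_col_e1b n f -> first_col_e1 (mx_of_int f).
Proof.
move=> fe1 i j j0; rewrite mxE.
have /implyP/(_ (introT eqP j0))/eqP -> := all_ijP fe1 i j.
by rewrite -(inj_eq val_inj); case: (_ == _).
Qed.

Lemma tridiagonal_mx_of_int {f} : tridiagonalb n f -> tridiagonal (mx_of_int f).
Proof. by move=> fT i j far; rewrite mxE (eqP (implyP (all_ijP fT i j) far)). Qed.

End IntegerMatrices.

Definition aasen_witness n (fA fL fT : nat -> nat -> int) : bool :=
  [&& all_ij n (fun i j => fA j i == fA i j), maxabs_is n fA 1,
      all_ij n (fun i j => fA i j == mulf n (mulf n fL fT) (trf fL) i j),
      unit_lowerb n fL, first_col_e1b n fL, all_ij n (fun i j => `|fL i j| <= 1),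
      all_ij n (fun i j => fT j i == fT i j), tridiagonalb n fT
    & maxabs_is n fT (2 ^+ n.-1)].

Lemma aasen_witness_growth {R : realFieldType} {n fA fL fT} {eps : R} :
  0 < eps -> aasen_witness n fA fL fT ->
  exists (A L T : 'M[R]_n),
    A^T = A /\ maxabs A = 1 /\ A = L *m T *m L^T /\
    unit_lower L /\ first_col_e1 L /\ (forall i j, `|L i j| <= 1) /\
    T^T = T /\ tridiagonal T /\
    2%:R ^+ (n.-1) - eps < maxabs T.
Proof.
move=> eps_gt0 /and5P[Asym Amax ALTL Llow /and5P[Le1 Lle1 Tsym Ttri Tmax]].
exists (mx_of_int R n fA), (mx_of_int R n fL), (mx_of_int R n fT).
split; first exact: mx_of_int_sym.
split; first by rewrite (maxabs_mx_of_int Amax).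
split; first by rewrite mx_of_int_tr !mx_of_int_mul; apply: eq_mx_of_int.
split; first exact: unit_lower_mx_of_int.
split; first exact: first_col_e1_mx_of_int.
split; first exact: mx_of_int_norm_le1.
split; first exact: mx_of_int_sym.
split; first exact: tridiagonal_mx_of_int.
by rewrite (maxabs_mx_of_int Tmax) rmorphXn /= ltrBlDr ltrDl.
Qed.

Definition fun_of_rows (rows : seq (seq int)) i j : int := nth 0 (nth [::] rows i) j.

Definition A4 := fun_of_rows
  [:: [:: 0;  0;  0;  0]; [:: 0; -1; -1; -1]; [:: 0; -1;  1;  1]; [:: 0; -1;  1;  1]].
Definition L4 := fun_of_rows
  [:: [:: 1;  0;  0;  0]; [:: 0;  1;  0;  0]; [:: 0;  1;  1;  0]; [:: 0;  1; -1;  1]].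
Definition T4 := fun_of_rows
  [:: [:: 0;  0;  0;  0]; [:: 0; -1;  0;  0]; [:: 0;  0;  2;  4]; [:: 0;  0;  4;  8]].

Definition A5 := fun_of_rows
  [:: [:: 0;  0;  0;  0;  0]; [:: 0;  0; -1;  1;  1]; [:: 0; -1;  1;  1;  1];
      [:: 0;  1;  1;  1;  1]; [:: 0;  1;  1;  1;  1]].
Definition L5 := fun_of_rows
  [:: [:: 1;  0;  0;  0;  0]; [:: 0;  1;  0;  0;  0]; [:: 0; -1;  1;  0;  0];
      [:: 0; -1; -1;  1;  0]; [:: 0; -1; -1; -1;  1]].
Definition T5 := fun_of_rows
  [:: [:: 0;  0;  0;  0;  0]; [:: 0;  0; -1;  0;  0]; [:: 0; -1; -1;  0;  0];
      [:: 0;  0;  0;  4;  8]; [:: 0;  0;  0;  8; 16]].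

Lemma aasen_witness4 : aasen_witness 4 A4 L4 T4.
Proof. by vm_compute. Qed.

Lemma aasen_witness5 : aasen_witness 5 A5 L5 T5.
Proof. by vm_compute. Qed.

Theorem mainTheorem3 (R : realFieldType) (n : nat) (hn : n = 4%N \/ n = 5%N)
  (eps : R) (heps : 0 < eps) :
  exists (A L T : 'M[R]_n),
    A^T = A /\ maxabs A = 1 /\ A = L *m T *m L^T /\
    unit_lower L /\ first_col_e1 L /\ (forall i j, `|L i j| <= 1) /\
    T^T = T /\ tridiagonal T /\
    2%:R ^+ (n.-1) - eps < maxabs T.
Proof.
case: hn => ->.
- exact: aasen_witness_growth heps aasen_witness4.
- exact: aasen_witness_growth heps aasen_witness5.
Qed.
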